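(* Let $R$ be a Cohen–Macaulay normal domain and $M$ a finitely generated reflexive $R$-module with $\operatorname{End}_R(M)\in\operatorname{add}_RM$. Then $R\in\operatorname{add}_RM$ (i.e. $M$ is a generator) provided one of the following holds: (i) $R$ contains a field of characteristic zero; (ii) $M$ has a rank one reflexive $R$-module as a direct summand. In particular, if $M$ is a direct sum of rank one reflexive $R$-modules, then $M$ is a generator.
   Context: $\operatorname{add}_RM$ denotes the category of direct summands of finite direct sums of copies of $M$; $M$ is a generator if $R\in\operatorname{add}_RM$. *)

From HB Require Import structures.
From mathcomp Require Import all_boot all_order all_algebra.
From mathcomp Require Import fraction.
Set Implicit Arguments. Unset Strict Implicit. Unset Printing Implicit Defensive.
Import Order.TTheory GRing.Theory Num.Theory.
Local Open Scope ring_scope.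

Section CommAlg.
Variable R : idomainType.

Definition is_ideal (I : R -> Prop) : Prop :=
  I 0 /\ (forall x y, I x -> I y -> I (x + y)) /\ (forall r x, I x -> I (r * x)).

Definition is_prime_ideal (P : R -> Prop) : Prop :=
  is_ideal P /\ ~ P 1 /\ (forall a b, P (a * b) -> P a \/ P b).

Definition is_maximal_ideal (m : R -> Prop) : Prop :=
  is_ideal m /\ ~ m 1 /\
  (forall J : R -> Prop, is_ideal J -> (forall x, m x -> J x) ->
     (forall x, J x <-> m x) \/ J 1).

Definition in_ideal_span (s : seq R) (x : R) : Prop :=
  exists c : 'I_(size s) -> R, x = \sum_(i < size s) c i * s`_i.

Definition noetherian_ring : Prop :=
  forall I : R -> Prop, is_ideal I ->
    exists s : seq R, forall x, I x <-> in_ideal_span s x.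

(* s = x_1,...,x_n (elements of m) is a regular sequence on the localization
   R_m, written out with elements of R: "y in (x_1..x_{i-1}) R_m" means
   "t y in (x_1..x_{i-1}) for some t outside m". Since every x_i lies in m,
   R_m/(x)R_m <> 0 automatically. *)
Definition loc_regular_seq (m : R -> Prop) (s : seq R) : Prop :=
  (forall i, (i < size s)%N -> m s`_i) /\
  (forall i, (i < size s)%N -> forall r : R,
     (exists t, ~ m t /\ in_ideal_span (take i s) (t * (s`_i * r))) ->
     (exists t, ~ m t /\ in_ideal_span (take i s) (t * r))).

Definition prime_chain_to (m : R -> Prop) (n : nat) : Prop :=
  exists P : nat -> R -> Prop,
    (forall i, (i <= n)%N -> is_prime_ideal (P i)) /\
    (forall i, (i < n)%N ->
        (forall x, P i x -> P i.+1 x) /\ (exists x, P i.+1 x /\ ~ P i x)) /\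
    (forall x, P n x <-> m x).

Definition local_depth_eq (m : R -> Prop) (d : nat) : Prop :=
  (exists s, size s = d /\ loc_regular_seq m s) /\
  (forall s, loc_regular_seq m s -> (size s <= d)%N).

(* dim R_m = height m = d *)
Definition height_eq (m : R -> Prop) (d : nat) : Prop :=
  prime_chain_to m d /\ (forall n, prime_chain_to m n -> (n <= d)%N).

Definition cohen_macaulay_ring : Prop :=
  noetherian_ring /\
  forall m : R -> Prop, is_maximal_ideal m ->
    exists d : nat, local_depth_eq m d /\ height_eq m d.

Definition normal_domain : Prop :=
  forall x : {fraction R}, integralOver (@tofrac R) x ->
    exists r : R, x = tofrac r.

Definition contains_char0_field : Prop :=
  exists S : R -> Prop,
    S 1 /\ (forall x y, S x -> S y -> S (x - y)) /\
    (forall x y, S x -> S y -> S (x * y)) /\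
    (forall x, S x -> x != 0 -> exists y, S y /\ x * y = 1) /\
    (forall n : nat, (0 < n)%N -> (n%:R : R) != 0).

Definition Rlinear (U V : lmodType R) (f : U -> V) : Prop :=
  forall (a : R) (x y : U), f (a *: x + y) = a *: f x + f y.

Definition fin_generated (M : lmodType R) : Prop :=
  exists s : seq M, forall x : M,
    exists c : 'I_(size s) -> R, x = \sum_(i < size s) c i *: s`_i.

(* the canonical map M -> M** (M* = Hom_R(M,R)) is bijective *)
Definition reflexive_mod (M : lmodType R) : Prop :=
  (forall x : M, (forall f : M -> R^o, Rlinear f -> f x = 0) -> x = 0) /\
  (forall phi : (M -> R^o) -> R,
     (forall (a : R) (f g : M -> R^o), Rlinear f -> Rlinear g ->
        phi (fun x => a *: f x + g x) = a * phi f + phi g) ->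
     exists x : M, forall f : M -> R^o, Rlinear f -> phi f = f x).

Definition has_rank (M : lmodType R) (r : nat) : Prop :=
  exists s : seq M, size s = r /\
    (forall c : 'I_(size s) -> R,
       \sum_(i < size s) c i *: s`_i = 0 -> forall i, c i = 0) /\
    (forall x : M, exists a : R, a != 0 /\
       exists c : 'I_(size s) -> R, a *: x = \sum_(i < size s) c i *: s`_i).

(* End_R(M) in add_R M: End_R(M) is a direct summand of M^n for some n *)
Definition End_in_add (M : lmodType R) : Prop :=
  exists (n : nat) (i : (M -> M) -> 'I_n -> M) (p : ('I_n -> M) -> M -> M),
    (forall (a : R) (f g : M -> M), Rlinear f -> Rlinear g ->
       i (fun x => a *: f x + g x) = (fun j => a *: i f j + i g j)) /\
    (forall v, Rlinear (p v)) /\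
    (forall (a : R) (v w : 'I_n -> M),
       p (fun j => a *: v j + w j) = (fun x => a *: p v x + p w x)) /\
    (forall f, Rlinear f -> p (i f) = f).

(* R in add_R M: M is a generator *)
Definition is_generator (M : lmodType R) : Prop :=
  exists (n : nat) (i : R -> 'I_n -> M) (p : ('I_n -> M) -> R),
    (forall a b c : R, i (a * b + c) = (fun j => a *: i b j + i c j)) /\
    (forall (a : R) (v w : 'I_n -> M),
       p (fun j => a *: v j + w j) = a * p v + p w) /\
    (forall r, p (i r) = r).

Definition has_rank_one_reflexive_summand (M : lmodType R) : Prop :=
  exists (N : lmodType R) (i : N -> M) (p : M -> N),
    Rlinear i /\ Rlinear p /\ (forall x, p (i x) = x) /\
    has_rank N 1 /\ reflexive_mod N.

Definition sum_of_rank_one_reflexives (M : lmodType R) : Prop :=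
  exists (n : nat) (N : 'I_n -> lmodType R)
         (inj : forall j, N j -> M) (proj : forall j, M -> N j),
    (0 < n)%N /\
    (forall j, Rlinear (inj j) /\ Rlinear (proj j) /\
               has_rank (N j) 1 /\ reflexive_mod (N j)) /\
    (forall j x, proj j (inj j x) = x) /\
    (forall j k x, j != k -> proj k (inj j x) = 0) /\
    (forall x : M, x = \sum_(j < n) inj j (proj j x)).

End CommAlg.

(* A reflexive module is torsion-free, so a maximal independent
   family e_1, ..., e_r of M gives coordinates in K^r, K the fraction field of
   R, and every endomorphism f of M a matrix A_f over K. The maximal minors of
   the coordinate matrix of a generating family of M form a nonzero vector on
   which multiplication by det A_f is given by a matrix over R (Cauchy-Binet),
   so det A_f is integral over R and lies in R since R is normal.
   (i) If R contains Q, then det (n + A_f) in R for n = 0, ..., r forces the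
   characteristic polynomial of A_f into R[X] by Lagrange interpolation, so
   f |-> tr A_f / r is an R-linear retraction End_R(M) -> R of the scalar
   maps. (ii) If M = N (+) N' with N of rank one, the 1 x 1 matrix of the
   compression of f to N is such a retraction. Either way R is a direct
   summand of End_R(M), hence of a power of M. *)

From Stdlib Require Import ClassicalEpsilon FunctionalExtensionality Classical.
From HB Require Import structures.
From mathcomp Require Import all_boot all_order all_algebra.
From mathcomp Require Import fraction fingroup perm ring.
Set Implicit Arguments. Unset Strict Implicit. Unset Printing Implicit Defensive.
Import Order.TTheory GRing.Theory Num.Theory.
Local Open Scope ring_scope.

Section Linear.
Variable R : idomainType.
Implicit Types U V W : lmodType R.

Lemma Rlinear0 U V (f : U -> V) : Rlinear f -> f 0 = 0.
Proof.
move=> lin_f; have := lin_f 1 0 0; rewrite scaler0 addr0 scale1r => f0.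
by apply: (@addrI _ (f 0)); rewrite addr0 -f0.
Qed.

Lemma RlinearZ U V (f : U -> V) a x : Rlinear f -> f (a *: x) = a *: f x.
Proof. by move=> lin_f; have := lin_f a x 0; rewrite !addr0 (Rlinear0 lin_f) addr0. Qed.

Lemma RlinearD U V (f : U -> V) x y : Rlinear f -> f (x + y) = f x + f y.
Proof. by move=> lin_f; have := lin_f 1 x y; rewrite !scale1r. Qed.

Lemma Rlinear_sum U V (f : U -> V) (I : finType) (c : I -> R) (v : I -> U) :
  Rlinear f -> f (\sum_i c i *: v i) = \sum_i c i *: f (v i).
Proof.
move=> lin_f; apply: (big_ind2 (fun x y => f x = y)) => [|x1 y1 x2 y2 <- <-|i _].
- exact: Rlinear0.
- exact: RlinearD.
- exact: RlinearZ.
Qed.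

Lemma Rlinear_id V : Rlinear (fun x : V => x).
Proof. by []. Qed.

Lemma Rlinear_scale V (b : R) : Rlinear (fun x : V => b *: x).
Proof. by move=> a x y; rewrite scalerDr !scalerA mulrC. Qed.

Lemma Rlinear_comb U V (a : R) (f g : U -> V) :
  Rlinear f -> Rlinear g -> Rlinear (fun x => a *: f x + g x).
Proof.
move=> lin_f lin_g b x y; rewrite lin_f lin_g !scalerDr !scalerA [b * a]mulrC.
by rewrite addrACA.
Qed.

Lemma Rlinear_comp U V W (f : U -> V) (g : V -> W) :
  Rlinear f -> Rlinear g -> Rlinear (fun x => g (f x)).
Proof. by move=> lin_f lin_g a x y; rewrite lin_f lin_g. Qed.

Lemma reflexive_torsionfree V (a : R) (x : V) :
  reflexive_mod V -> a != 0 -> a *: x = 0 -> x = 0.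
Proof.
move=> [sep _] a_neq0 ax0; apply: sep => f lin_f.
have /eqP : f (a *: x) = 0 by rewrite ax0 Rlinear0.
by rewrite RlinearZ // [_ *: _]/(a * f x) mulf_eq0 (negPf a_neq0) => /eqP.
Qed.

End Linear.

Lemma horner_char_poly (R : comNzRingType) n (A : 'M[R]_n) x :
  (char_poly A).[x] = \det (x%:M - A).
Proof.
rewrite -horner_evalE -det_map_mx; congr (\det _); apply/matrixP => i j.
by rewrite /char_poly_mx !mxE rmorphB rmorphMn /= !horner_evalE hornerX hornerC.
Qed.

Lemma det_mulmx_rowsub (R : comNzRingType) r m (A : 'M[R]_(r, m)) (B : 'M[R]_(m, r)) :
  \det (A *m B) =
  \sum_(t : {ffun 'I_r -> 'I_m}) (\prod_i A i (t i)) * \det (rowsub t B).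
Proof.
rewrite [LHS]/determinant.
transitivity (\sum_(s : 'S_r) \sum_(t : {ffun 'I_r -> 'I_m})
    (-1) ^+ s * ((\prod_i A i (t i)) * \prod_i B (t i) (s i))).
  apply: eq_bigr => s _; rewrite -mulr_sumr; congr (_ * _).
  under eq_bigr do rewrite mxE.
  by rewrite bigA_distr_bigA; apply: eq_bigr => t _; rewrite -big_split.
rewrite exchange_big; apply: eq_bigr => t _; rewrite /determinant mulr_sumr.
apply: eq_bigr => s _; rewrite mulrCA; congr (_ * (_ * _)).
by apply: eq_bigr => i _; rewrite mxE.
Qed.

Lemma integral_eigenvalue (R : comNzRingType) (K : fieldType) (f : {rmorphism R -> K})
    (I : finType) (B : I -> I -> R) (u : I -> K) (q : K) :
  (exists i, u i != 0) -> (forall i, q * u i = \sum_j f (B i j) * u j) ->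
  integralOver f q.
Proof.
move=> [i0 ui0_neq0] eigen.
pose U : 'rV[K]_#|I| := \row_k u (enum_val k).
pose BM : 'M[R]_#|I| := \matrix_(k, l) B (enum_val l) (enum_val k).
exists (char_poly BM); first exact: char_poly_monic.
rewrite /root map_char_poly horner_char_poly; apply/det0P; exists U.
  apply: contra ui0_neq0 => /eqP/rowP/(_ (enum_rank i0)).
  by rewrite !mxE enum_rankK => ->.
apply/rowP => l; rewrite mulmxBr mul_mx_scalar !mxE eigen.
rewrite (reindex _ (onW_bij _ (enum_val_bij I))) /=.
apply/eqP; rewrite subr_eq0; apply/eqP.
by apply: eq_bigr => k _; rewrite !mxE mulrC.
Qed.

Lemma interpolation_coef (R : comUnitRingType) (K : fieldType) (f : {rmorphism R -> K})
    n (p : {poly K}) :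
  (forall k, (0 < k <= n)%N -> k%:R \is a @GRing.unit R) ->
  (size p <= n.+1)%N ->
  (forall j : 'I_n.+1, exists w, p.[j%:R] = f w) ->
  forall k, exists w, p`_k = f w.
Proof.
move=> nat_unit size_p /fin_all_exists[w p_w] k.
have [k_small|k_large] := ltnP k n.+1; last first.
  by exists 0; rewrite rmorph0 nth_default // (leq_trans size_p k_large).
pose V := Vandermonde n.+1 (\row_(j < n.+1) (j : nat)%:R : 'rV[R]_n.+1).
have V_unit : \det V \is a GRing.unit.
  have unit_prod (I : finType) (P : pred I) (F : I -> R) :
      (forall i, P i -> F i \is a GRing.unit) -> \prod_(i | P i) F i \is a GRing.unit.
    move=> unitF; apply: (big_ind (fun x : R => x \is a GRing.unit)) => //.
    - exact: unitr1.
    - by move=> x y ux uy; rewrite unitrM ux uy.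
  rewrite det_Vandermonde; apply: (unit_prod) => i _; apply: unit_prod => j lt_ij.
  rewrite !mxE -natrB ?(ltnW lt_ij) //; apply: nat_unit.
  by rewrite subn_gt0 lt_ij leq_subLR (leq_trans (leq_ord j)) ?leq_addl.
have coefV : \row_i p`_i *m map_mx f V = map_mx f (\row_j w j).
  apply/rowP => j; rewrite !mxE -p_w (horner_coef_wide _ size_p).
  by apply: eq_bigr => i _; rewrite !mxE rmorphXn rmorph_nat.
exists (((\row_j w j) *m \adj V) 0 (Ordinal k_small) / \det V).
have := congr1 (mulmx^~ (map_mx f (\adj V))) coefV.
rewrite -mulmxA -!map_mxM mul_mx_adj map_scalar_mx mul_mx_scalar.
move=> /rowP /(_ (Ordinal k_small)); rewrite !mxE => coef_k.
have fV_neq0 : f (\det V) != 0 by rewrite -unitfE rmorph_unit.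
by rewrite rmorphM rmorphV // -coef_k mulrC mulKf.
Qed.

Section FracSpan.
Variables (R : idomainType) (X : lmodType R).

Definition indep_seq (s : seq X) : Prop :=
  forall c : 'I_(size s) -> R, \sum_i c i *: s`_i = 0 -> forall i, c i = 0.

Definition in_frac_span (s : seq X) (x : X) : Prop :=
  exists a : R, a != 0 /\ exists c : 'I_(size s) -> R, a *: x = \sum_i c i *: s`_i.

Lemma in_frac_span0 s : in_frac_span s 0.
Proof.
exists 1; split; first exact: oner_neq0.
by exists (fun=> 0); rewrite scaler0 big1 // => i _; rewrite scale0r.
Qed.

Lemma in_frac_spanD s x y :
  in_frac_span s x -> in_frac_span s y -> in_frac_span s (x + y).
Proof.
move=> [a [a_neq0 [c ax]]] [b [b_neq0 [d by_]]]; exists (a * b).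
split; first by rewrite mulf_neq0.
exists (fun i => b * c i + a * d i).
have -> : (a * b) *: (x + y) = b *: (a *: x) + a *: (b *: y).
  by rewrite scalerDr !scalerA [b * a]mulrC.
rewrite ax by_ !scaler_sumr -big_split.
by apply: eq_bigr => i _; rewrite scalerDl !scalerA.
Qed.

Lemma in_frac_spanZ s b x : in_frac_span s x -> in_frac_span s (b *: x).
Proof.
move=> [a [a_neq0 [c ax]]]; exists a; split => //; exists (fun i => b * c i).
rewrite scalerA mulrC -scalerA ax scaler_sumr.
by apply: eq_bigr => i _; rewrite scalerA.
Qed.

Lemma in_frac_span_cons s y x : in_frac_span s x -> in_frac_span (y :: s) x.
Proof.
move=> [a [a_neq0 [c ax]]]; exists a; split => //.
exists (fun i : 'I_(size s).+1 => oapp c 0 (unlift ord0 i)).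
rewrite big_ord_recl /= unlift_none scale0r add0r ax.
by apply: eq_bigr => i _; rewrite liftK.
Qed.

Lemma in_frac_span_head s y : in_frac_span (y :: s) y.
Proof.
exists 1; split; first exact: oner_neq0.
exists (fun i : 'I_(size s).+1 => oapp (fun=> 0) 1 (unlift ord0 i)).
rewrite big_ord_recl /= unlift_none scale1r big1 ?addr0 // => i _.
by rewrite liftK scale0r.
Qed.

Lemma indep_seq_consVspan s y :
  indep_seq s -> indep_seq (y :: s) \/ in_frac_span s y.
Proof.
move=> indep_s; have [|dep] := classic (indep_seq (y :: s)); [by left | right].
have [c [c_rel [i0 ci0_neq0]]] : exists c : 'I_(size s).+1 -> R,
    \sum_i c i *: (y :: s)`_i = 0 /\ exists i, c i != 0.
  apply: NNPP => no_rel; apply: dep => c c_rel i; apply: NNPP => ci_neq0.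
  by apply: no_rel; exists c; split => //; exists i; apply/eqP.
move: c_rel; rewrite big_ord_recl /=.
under eq_bigr do rewrite add0n.
have [c0_eq0|c0_neq0] := eqVneq (c ord0) 0.
  rewrite c0_eq0 scale0r add0r => /indep_s c_lift_eq0.
  move: ci0_neq0; case: (unliftP ord0 i0) => [j ->|->].
    by rewrite c_lift_eq0 eqxx.
  by rewrite c0_eq0 eqxx.
move=> /eqP; rewrite addr_eq0 => /eqP yc.
exists (c ord0); split => //; exists (fun i => - c (lift ord0 i)).
by rewrite yc -sumrN; apply: eq_bigr => i _; rewrite scaleNr.
Qed.

Lemma indep_seq_spanning (gs : seq X) :
  exists s, indep_seq s /\ {in gs, forall y, in_frac_span s y}.
Proof.
elim: gs => [|y gs [s [indep_s span_gs]]].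
  by exists [::]; split => // c _ [].
have [indep_ys|span_y] := indep_seq_consVspan y indep_s.
  exists (y :: s); split => // z; rewrite inE => /predU1P[->|/span_gs].
    exact: in_frac_span_head.
  exact: in_frac_span_cons.
by exists s; split => // z; rewrite inE => /predU1P[->|/span_gs].
Qed.

Lemma fin_generated_frac_basis : fin_generated X ->
  exists s, indep_seq s /\ forall x, in_frac_span s x.
Proof.
move=> [gs gen]; have [s [indep_s span_gs]] := indep_seq_spanning gs.
exists s; split => // x; have [c ->] := gen x.
apply: (big_ind (in_frac_span s)) => [|y z|i _].
- exact: in_frac_span0.
- exact: in_frac_spanD.
- by apply/in_frac_spanZ/span_gs/mem_nth.
Qed.

End FracSpan.

Section Coordinates.
Variables (R : idomainType) (X : lmodType R) (s : seq X).
Hypotheses (s_indep : indep_seq s) (s_span : forall x, in_frac_span s x).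
Local Notation K := {fraction R}.
Local Notation tf := (@tofrac R).
Local Notation r := (size s).

Definition coord_rep (x : X) (v : 'rV[K]_r) : Prop :=
  exists a (c : 'I_r -> R),
    [/\ a != 0, a *: x = \sum_i c i *: s`_i & v = \row_i (tf (c i) / tf a)].

Lemma coord_rep_uniq x v w : coord_rep x v -> coord_rep x w -> v = w.
Proof.
move=> [a [c [a_neq0 ax ->]]] [b [d [b_neq0 bx ->]]].
have /s_indep cross : \sum_i (b * c i - a * d i) *: s`_i = 0.
  transitivity (b *: (a *: x) - a *: (b *: x)); last first.
    by rewrite !scalerA mulrC subrr.
  rewrite ax bx !scaler_sumr -sumrB.
  by apply: eq_bigr => i _; rewrite scalerBl !scalerA.
apply/rowP => i; rewrite !mxE; apply/eqP.
rewrite eqr_div ?tofrac_eq0 // -!tofracM tofrac_eq -subr_eq0.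
by rewrite [c i * b]mulrC [d i * a]mulrC cross.
Qed.

Definition coord (x : X) : 'rV[K]_r := epsilon (inhabits 0) (coord_rep x).

Lemma coordP x : coord_rep x (coord x).
Proof.
have [a [a_neq0 [c ax]]] := s_span x; apply: epsilon_spec.
by exists (\row_i (tf (c i) / tf a)), a, c.
Qed.

Lemma coordE x v : coord_rep x v -> coord x = v.
Proof. exact: coord_rep_uniq (coordP x). Qed.

Lemma coord_comb b x y : coord (b *: x + y) = tf b *: coord x + coord y.
Proof.
apply: coordE; have [a [c [a_neq0 ax ->]]] := coordP x.
have [a' [c' [a'_neq0 a'y ->]]] := coordP y.
exists (a * a'), (fun i => b * c i * a' + c' i * a); split.
- by rewrite mulf_neq0.
- have -> : (a * a') *: (b *: x + y) = (b * a') *: (a *: x) + a *: (a' *: y).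
    by rewrite scalerDr !scalerA; congr (_ *: _ + _ *: _); ring.
  rewrite ax a'y !scaler_sumr -big_split; apply: eq_bigr => i _.
  by rewrite scalerDl !scalerA; congr (_ *: _ + _ *: _); ring.
- apply/rowP => i; rewrite !mxE mulrA addf_div ?tofrac_eq0 //.
  by rewrite tofracD !tofracM.
Qed.

Lemma coord0 : coord 0 = 0.
Proof.
have := coord_comb 1 0 0; rewrite scaler0 addr0 rmorph1 scale1r => c0.
by apply: (@addrI _ (coord 0)); rewrite addr0 -c0.
Qed.

Lemma coordZ b x : coord (b *: x) = tf b *: coord x.
Proof. by have := coord_comb b x 0; rewrite !addr0 coord0 addr0. Qed.

Lemma coordD x y : coord (x + y) = coord x + coord y.
Proof. by have := coord_comb 1 x y; rewrite tofrac1 !scale1r. Qed.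

Lemma coord_sum (I : finType) (c : I -> R) (v : I -> X) :
  coord (\sum_i c i *: v i) = \sum_i tf (c i) *: coord (v i).
Proof.
apply: (big_ind2 (fun x y => coord x = y)) => [|x1 y1 x2 y2 <- <-|i _].
- exact: coord0.
- exact: coordD.
- exact: coordZ.
Qed.

Lemma coord_nth (j : 'I_r) : coord s`_j = delta_mx 0 j.
Proof.
apply: coordE; exists 1, (fun i => (i == j)%:R); split.
- exact: oner_neq0.
- rewrite scale1r (bigD1 j) //= eqxx scale1r big1 ?addr0 // => i /negPf ->.
  by rewrite scale0r.
- by apply/rowP => i; rewrite !mxE rmorph1 divr1 rmorph_nat eqxx.
Qed.

Definition coord_mx (f : X -> X) : 'M[K]_r := \matrix_j coord (f s`_j).

Lemma eq_coord_mx f g : f =1 g -> coord_mx f = coord_mx g.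
Proof. by move=> fg; apply/matrixP => j l; rewrite !mxE fg. Qed.

Lemma coord_apply f x : Rlinear f -> coord (f x) = coord x *m coord_mx f.
Proof.
move=> lin_f; have [a [c [a_neq0 ax ->]]] := coordP x.
have ta_neq0 : tf a != 0 by rewrite tofrac_eq0.
have := congr1 coord (congr1 f ax).
rewrite RlinearZ // Rlinear_sum // coordZ coord_sum => /(congr1 ( *:%R (tf a)^-1)).
rewrite scalerA mulVf // scale1r => ->; rewrite mulmx_sum_row scaler_sumr.
by apply: eq_bigr => i _; rewrite rowK mxE scalerA mulrC.
Qed.

Lemma coord_mx_comb b f g :
  coord_mx (fun x => b *: f x + g x) = tf b *: coord_mx f + coord_mx g.
Proof. by apply/matrixP => j l; rewrite !mxE coord_comb !mxE. Qed.

Lemma coord_mx_scale b : coord_mx (fun x => b *: x) = (tf b)%:M.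
Proof.
by apply/matrixP => j l; rewrite !mxE coordZ coord_nth !mxE eqxx eq_sym mulr_natr.
Qed.

Lemma coord_mx_id : coord_mx (fun x => x) = 1%:M.
Proof. by apply/matrixP => j l; rewrite !mxE coord_nth !mxE eqxx eq_sym. Qed.

Variables (m : nat) (g : 'I_m -> X).
Hypothesis g_gen : forall x, exists c : 'I_m -> R, x = \sum_k c k *: g k.

Definition gen_coords : 'M[K]_(m, r) := \matrix_k coord (g k).

Lemma gen_coords_full : row_full gen_coords.
Proof.
have /fin_all_exists[c s_g] : forall j : 'I_r,
    exists c : 'I_m -> R, s`_j = \sum_k c k *: g k by move=> j; exact: g_gen.
rewrite -sub1mx; apply/submxP; exists (\matrix_(j, k) tf (c j k)).
apply/row_matrixP => j; rewrite row_mul row1 -coord_nth s_g coord_sum mulmx_sum_row.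
by apply: eq_bigr => k _; rewrite rowK !mxE.
Qed.

Lemma gen_coords_mul_coord_mx f : Rlinear f ->
  exists B : 'M[R]_m, gen_coords *m coord_mx f = map_mx tf B *m gen_coords.
Proof.
move=> lin_f; have /fin_all_exists[B f_g] : forall k,
    exists c : 'I_m -> R, f (g k) = \sum_l c l *: g l by move=> k; exact: g_gen.
exists (\matrix_(k, l) B k l); apply/row_matrixP => k.
rewrite !row_mul rowK -coord_apply // f_g coord_sum mulmx_sum_row.
by apply: eq_bigr => l _; rewrite rowK !mxE.
Qed.

(* The minors [\det (rowsub t gen_coords)] form an eigenvector, with eigenvalue
   [\det (coord_mx f)], of the matrix over R induced by f on the generators. *)
Lemma det_coord_mx_integral f : Rlinear f -> integralOver tf (\det (coord_mx f)).
Proof.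
move=> /gen_coords_mul_coord_mx[B GA]; have rkG := gen_coords_full.
apply: (integral_eigenvalue
  (B := fun t u : {ffun 'I_r -> 'I_m} => \prod_i B (t i) (u i))
  (u := fun t => \det (rowsub t gen_coords))).
  exists (finfun (fullrankfun rkG)); rewrite -unitfE -unitmxE.
  by rewrite (eq_rowsub (fullrankfun rkG) (ffunE _) gen_coords) fullrowsub_unit.
move=> t; rewrite mulrC -det_mulmx mul_rowsub_mx GA -mul_rowsub_mx det_mulmx_rowsub.
apply: eq_bigr => u _; rewrite rmorph_prod; congr (_ * _).
by apply: eq_bigr => i _; rewrite !mxE.
Qed.

Lemma det_coord_mx_tofrac f : normal_domain R -> Rlinear f ->
  exists w, \det (coord_mx f) = tf w.
Proof. by move=> normalR /det_coord_mx_integral; apply: normalR. Qed.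

Lemma trace_coord_mx_tofrac f : normal_domain R ->
  (forall n, (0 < n)%N -> n%:R \is a @GRing.unit R) -> Rlinear f ->
  exists w, \tr (coord_mx f) = tf w.
Proof.
move=> normalR nat_unit lin_f; set A := coord_mx f.
have [r_eq0|r_gt0] := posnP r.
  exists 0; rewrite rmorph0 /mxtrace big1 // => i _.
  by have := leq_trans (ltn_ord i) (eq_leq r_eq0).
(* The values of [char_poly (- A)] at 0, ..., r are determinants of coordinate
   matrices of endomorphisms, hence lie in R. *)
have char_val (j : 'I_r.+1) : exists w, (char_poly (- A)).[j%:R] = tf w.
  have [w det_w] := det_coord_mx_tofrac normalR
    (Rlinear_comb j%:R (@Rlinear_id _ X) lin_f).
  exists w; rewrite horner_char_poly opprK -det_w coord_mx_comb coord_mx_id.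
  by rewrite scalemx1 !rmorph_nat.
have [|w coef_w] := interpolation_coef (f := tf) _
  (eq_leq (size_char_poly (- A))) char_val r.-1.
  by move=> k /andP[k_gt0 _]; exact: nat_unit.
by exists w; rewrite -coef_w char_poly_trace // raddfN opprK.
Qed.

End Coordinates.

Lemma generator_of_scalar_retraction (R : idomainType) (M : lmodType R)
    (tau : (M -> M) -> {fraction R}) (c : R) :
  c \is a GRing.unit ->
  (forall a f g, Rlinear f -> Rlinear g ->
     tau (fun x => a *: f x + g x) = tofrac a * tau f + tau g) ->
  (forall f, Rlinear f -> exists w, tau f = tofrac w) ->
  (forall b, tau (fun x => b *: x) = tofrac (b * c)) ->
  End_in_add M -> is_generator M.
Proof.
move=> c_unit tau_lin tau_R tau_scale [n [i [p [i_lin [p_val [p_lin p_i]]]]]].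
pose tauR f := epsilon (inhabits 0) (fun w => tau f = tofrac w).
have tauRP f : Rlinear f -> tau f = tofrac (tauR f).
  by move=> lin_f; exact: epsilon_spec (tau_R f lin_f).
have tauRE f w : Rlinear f -> tau f = tofrac w -> tauR f = w.
  by move=> lin_f tau_w; apply/eqP; rewrite -tofrac_eq -tauRP // tau_w.
exists n, (fun b => i (fun x => b *: x)), (fun v => c^-1 * tauR (p v)); split; [|split].
- move=> a b d.
  have -> : (fun x : M => (a * b + d) *: x) = (fun x => a *: (b *: x) + d *: x).
    by apply: functional_extensionality => x; rewrite scalerDl scalerA.
  by apply: i_lin; exact: Rlinear_scale.
- move=> a v w; rewrite p_lin (@tauRE _ (a * tauR (p v) + tauR (p w))).
  + by rewrite mulrDr mulrCA.
  + by apply: Rlinear_comb; apply: p_val.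
  + rewrite tau_lin ?p_val // tofracD tofracM.
    by rewrite -!tauRP.
- move=> b; have lin_b : Rlinear (fun x : M => b *: x) by exact: Rlinear_scale.
  by rewrite p_i // (@tauRE _ (b * c)) ?tau_scale // mulrC mulrK.
Qed.

Lemma char0_nat_unit (R : idomainType) : contains_char0_field R ->
  forall n, (0 < n)%N -> n%:R \is a @GRing.unit R.
Proof.
move=> [S [S1 [S_sub [_ [S_inv char0]]]]] n n_gt0.
have S0 : S 0 by rewrite -(subrr 1); exact: S_sub.
have S_nat k : S k%:R.
  elim: k => [//|k S_k]; have := S_sub _ _ S_k (S_sub _ _ S0 S1).
  by rewrite sub0r opprK natr1.
have [y [_ ny]] := S_inv _ (S_nat n) (char0 n n_gt0).
by apply/unitrP; exists y; rewrite mulrC ny.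
Qed.

Lemma generator_char0 (R : idomainType) (M : lmodType R) : normal_domain R ->
  fin_generated M -> reflexive_mod M -> (exists x : M, x != 0) ->
  contains_char0_field R -> End_in_add M -> is_generator M.
Proof.
move=> normalR M_fg M_refl [x0 x0_neq0] /char0_nat_unit nat_unit.
have [s [s_indep s_span]] := fin_generated_frac_basis M_fg.
have [gs gen] := M_fg.
have s_gt0 : (0 < size s)%N.
  rewrite lt0n; apply: contra x0_neq0 => /eqP s_eq0.
  have [a [a_neq0 [c ax0]]] := s_span x0.
  apply/eqP/(reflexive_torsionfree M_refl a_neq0); rewrite ax0 big1 // => i _.
  by have := leq_trans (ltn_ord i) (eq_leq s_eq0).
apply: (@generator_of_scalar_retraction _ _ (fun f => \tr (coord_mx s f)) (size s)%:R).
- exact: nat_unit s_gt0.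
- by move=> a f g _ _; rewrite coord_mx_comb // mxtraceD mxtraceZ.
- by move=> f; apply: (trace_coord_mx_tofrac s_indep s_span gen).
- move=> b; rewrite coord_mx_scale // mxtrace_scalar.
  by rewrite rmorphM rmorph_nat mulr_natr.
Qed.

Lemma generator_of_rank_one_summand (R : idomainType) (M : lmodType R) :
  normal_domain R -> fin_generated M -> has_rank_one_reflexive_summand M ->
  End_in_add M -> is_generator M.
Proof.
move=> normalR [gs gen] [N [iN [pN [iN_lin [pN_lin [pNK [N_rank1 _]]]]]]].
have [s [s1 [s_indep s_span]]] := N_rank1.
case: s s1 s_indep s_span => [|e [|]] // _ e_indep e_span.
have genN (y : N) : exists c : 'I_(size gs) -> R, y = \sum_k c k *: pN gs`_k.
  by have [c iy] := gen (iN y); exists c; rewrite -[y]pNK iy Rlinear_sum.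
(* [tau F] is the (1 x 1) matrix of the compression [pN \o F \o iN] of F to N. *)
pose tau (F : M -> M) := coord_mx [:: e] (fun y => pN (F (iN y))) 0 0.
apply: (@generator_of_scalar_retraction _ _ tau 1); first exact: unitr1.
- move=> a f g lin_f lin_g; rewrite /tau.
  rewrite (eq_coord_mx _ (g := fun y => a *: pN (f (iN y)) + pN (g (iN y)))) => [|y].
    by rewrite coord_mx_comb // !mxE.
  exact: pN_lin.
- move=> f lin_f.
  have [w det_w] := det_coord_mx_tofrac e_indep e_span genN normalR
    (Rlinear_comp (Rlinear_comp iN_lin lin_f) pN_lin).
  by exists w; rewrite -det_w det_mx11.
- move=> b; rewrite /tau (eq_coord_mx _ (g := fun y => b *: y)) => [|y].
    by rewrite coord_mx_scale // mxE mulr1 mulr1n.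
  by rewrite RlinearZ ?pNK.
Qed.

Lemma rank_one_summand_of_sum (R : idomainType) (M : lmodType R) :
  sum_of_rank_one_reflexives M -> has_rank_one_reflexive_summand M.
Proof.
move=> [n [N [inj [proj [n_gt0 [summands [projK _]]]]]]].
have [inj_lin [proj_lin [rank1 refl]]] := summands (Ordinal n_gt0).
by exists (N (Ordinal n_gt0)), (inj (Ordinal n_gt0)), (proj (Ordinal n_gt0)).
Qed.

Unset Implicit Arguments.
Set Strict Implicit.

Theorem lemma2p6 (R : idomainType) (M : lmodType R) :
  cohen_macaulay_ring R -> normal_domain R ->
  fin_generated M -> reflexive_mod M -> (exists x : M, x != 0) ->
  End_in_add M ->
  ((contains_char0_field R \/ has_rank_one_reflexive_summand M) ->
     is_generator M) /\
  (sum_of_rank_one_reflexives M -> is_generator M).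
Proof.
move=> _ normalR M_fg M_refl M_neq0 M_End.
have rank_one h := generator_of_rank_one_summand normalR M_fg h M_End.
split; last by move=> /rank_one_summand_of_sum/rank_one.
case=> [char0|/rank_one //].
exact: generator_char0 normalR M_fg M_refl M_neq0 char0 M_End.
Qed.
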